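(* Let $n\ge3$, $0<\epsilon<1$, define $\alpha,\beta,\gamma,\delta$, $P$, $Q$ as in the context, and let $$h''(\rho) = \frac{\rho^{n+1} - \rho^n + \rho^n P(\rho) + \alpha + \beta\rho}{(1-\rho)\rho\,Q(\rho)}.$$ If $\epsilon>0$ is sufficiently small, then near $\rho=\epsilon$ there is a Laurent expansion $$h''(\rho) = \frac{1}{\rho-\epsilon} + \hat Q_0 + \hat Q_1(\rho-\epsilon) + \cdots$$ with real coefficients $\hat Q_0,\hat Q_1,\dots$; i.e. $h''$ has a simple pole at $\rho=\epsilon$ with residue $1$.
   Context: $D(\epsilon) = -n\epsilon^{n+2} + (n+2)\epsilon^{n+1} + n - (n+2)\epsilon$, $N(\epsilon) = -n\epsilon^{n+1} + (n+1)\epsilon^n - 1$, $K(\epsilon) = -1 + \frac{n+1}{n-1}\epsilon - \epsilon^{n-1} + \frac{n-3}{n-1}\epsilon^n$, $M(\epsilon) = \frac{\epsilon^{n+1}-1}{n(n+1)} + \frac{\epsilon-\epsilon^n}{n(n-1)}$; $\delta = \Big(\epsilon^{n-2}(1-\epsilon) - \frac{(n+2)N K}{D} + \frac{n(n-3)}{n-1}\epsilon^{n-1} - (n-1)\epsilon^{n-2} + \frac{n+1}{n-1}\Big)\Big(\frac{(n+2)N}{D}M + \frac{-(n-1)\epsilon^n + n\epsilon^{n-1}-1}{n(n-1)}\Big)^{-1}$, $\gamma = n(n+1)(n+2)(M\delta + K)/D$, $\alpha = -1 - \frac{\delta}{n(n+1)} - \frac{\gamma}{(n+1)(n+2)}$,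 $\beta = \frac{n+1}{n-1} + \frac{\delta}{n(n-1)} + \frac{\gamma}{n(n+1)}$ (denominators are nonzero for small $\epsilon$); $P(\rho) = -\frac{2n+\delta}{n(n-1)} + \frac{(\delta-\gamma)\rho}{n(n+1)} + \frac{\gamma\rho^2}{(n+1)(n+2)}$, $Q(\rho) = \rho^{n-1} - \rho^n - \rho^nP(\rho) - \alpha - \beta\rho$. *)

From Stdlib Require Import Reals.
From Coquelicot Require Import Coquelicot.
Open Scope R_scope.

Section Defs.
Variables (n : nat) (e : R).
Let nr := INR n.

Definition Dfun : R :=
  - nr * e ^ (n + 2) + (nr + 2) * e ^ (n + 1) + nr - (nr + 2) * e.
Definition Nfun : R :=
  - nr * e ^ (n + 1) + (nr + 1) * e ^ n - 1.
Definition Kfun : R :=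
  -1 + (nr + 1) / (nr - 1) * e - e ^ (n - 1) + (nr - 3) / (nr - 1) * e ^ n.
Definition Mfun : R :=
  (e ^ (n + 1) - 1) / (nr * (nr + 1)) + (e - e ^ n) / (nr * (nr - 1)).

Definition delta : R :=
  (e ^ (n - 2) * (1 - e) - (nr + 2) * Nfun * Kfun / Dfun
     + nr * (nr - 3) / (nr - 1) * e ^ (n - 1) - (nr - 1) * e ^ (n - 2)
     + (nr + 1) / (nr - 1))
  / ((nr + 2) * Nfun / Dfun * Mfun
     + (- (nr - 1) * e ^ n + nr * e ^ (n - 1) - 1) / (nr * (nr - 1))).

Definition gamma : R :=
  nr * (nr + 1) * (nr + 2) * (Mfun * delta + Kfun) / Dfun.

Definition alpha : R :=
  -1 - delta / (nr * (nr + 1)) - gamma / ((nr + 1) * (nr + 2)).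

Definition beta : R :=
  (nr + 1) / (nr - 1) + delta / (nr * (nr - 1)) + gamma / (nr * (nr + 1)).

Definition Pfun (rho : R) : R :=
  - (2 * nr + delta) / (nr * (nr - 1)) + (delta - gamma) * rho / (nr * (nr + 1))
  + gamma * rho ^ 2 / ((nr + 1) * (nr + 2)).

Definition Qfun (rho : R) : R :=
  rho ^ (n - 1) - rho ^ n - rho ^ n * Pfun rho - alpha - beta * rho.

Definition h2 (rho : R) : R :=
  (rho ^ (n + 1) - rho ^ n + rho ^ n * Pfun rho + alpha + beta * rho)
  / ((1 - rho) * rho * Qfun rho).
End Defs.

From Stdlib Require Import Reals Lra Lia Classical.
From Coquelicot Require Import Coquelicot.
Open Scope R_scope.

(* The constants are chosen so that Q(eps) = 0 (this fixes gamma) and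
   Q'(eps) = eps^(n-2) (1 - eps) (this fixes delta); the denominators involved do
   not vanish for small eps because at eps = 0 they are nonzero constants.  Since the
   numerator of h'' is rho^(n-1) (1 - rho)^2 - Q(rho),
     h''(rho) = G(rho) / Q(rho) - 1 / ((1 - rho) rho),   G(rho) = rho^(n-2) (1 - rho).
   Writing Q(eps + x) = x S(x), we have S(0) = Q'(eps) = G(eps), so
     h''(eps + x) - 1/x = (G(eps + x) / S(x) - 1) / x - 1 / ((1 - eps - x) (eps + x))
   is analytic at x = 0.  Functions given by a convergent power series near 0 are closed
   under sums, products, division by x when they vanish at 0, and reciprocals when they
   do not; for the latter, the coefficients of the reciprocal series are shown to grow
   at most geometrically. *)

Definition coeff_bound (L M : R) (a : nat -> R) : Prop :=
  forall k, Rabs (a k) <= M * L ^ k.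

Lemma coeff_bound_nonneg L M a : coeff_bound L M a -> 0 <= M.
Proof. intros H. specialize (H O). simpl in H. pose proof (Rabs_pos (a O)). lra. Qed.

Lemma CV_radius_coeff_bound L M a :
  0 < L -> coeff_bound L M a -> Rbar_le (/ L) (CV_radius a).
Proof.
  intros HL H. apply (proj1 (CV_radius_bounded a)). exists M. intros k.
  rewrite Rabs_mult, <- RPow_abs, (Rabs_pos_eq (/ L)) by (left; apply Rinv_0_lt_compat; lra).
  rewrite <- (Rmult_1_r M), <- (pow1 k), <- (Rinv_r L), Rpow_mult_distr, <- Rmult_assoc by lra.
  apply Rmult_le_compat_r; [apply pow_le; left; apply Rinv_0_lt_compat; lra | apply H].
Qed.

Lemma coeff_bound_CV_radius a r :
  0 < r -> Rbar_lt r (CV_radius a) -> exists M, coeff_bound (/ r) M a.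
Proof.
  intros Hr Hra.
  (* Otherwise [r] would bound the set whose supremum defines [CV_radius a]. *)
  assert (Hb : exists M, forall k, Rabs (a k * r ^ k) <= M).
  { apply NNPP; intros Hnb. apply (Rbar_lt_not_le _ _ Hra).
    apply (proj2 (CV_radius_bounded a)). intros s [M Hs]. simpl.
    apply Rnot_lt_le; intros Hrs. apply Hnb. exists M. intros k.
    eapply Rle_trans; [| apply (Hs k)]. rewrite !Rabs_mult.
    apply Rmult_le_compat_l; [apply Rabs_pos |].
    rewrite <- !RPow_abs. apply pow_incr. split; [apply Rabs_pos |].
    rewrite !Rabs_pos_eq; lra. }
  destruct Hb as [M HM]. exists M. intros k.
  specialize (HM k). rewrite Rabs_mult, (Rabs_pos_eq (r ^ k)) in HM by (apply pow_le; lra).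
  rewrite pow_inv. apply Rmult_le_reg_r with (r ^ k); [apply pow_lt; lra |].
  rewrite Rmult_assoc, Rinv_l by (apply pow_nonzero; lra). lra.
Qed.

Lemma Rbar_lt_below (x : Rbar) : Rbar_lt 0 x -> exists r, 0 < r /\ Rbar_lt r x.
Proof.
  destruct x as [x| |]; simpl; intros Hx; try contradiction.
  - exists (x / 2). split; lra.
  - exists 1. split; [lra | exact I].
Qed.

Lemma ball_0_Rabs (r x : R) : ball 0 r x <-> Rabs x < r.
Proof. change (Rabs (x + - 0) < r <-> Rabs x < r). rewrite Ropp_0, Rplus_0_r. tauto. Qed.

Lemma locally_0_Rabs r : 0 < r -> locally 0 (fun x => Rabs x < r).
Proof. intros Hr. exists (mkposreal r Hr). intros x. apply ball_0_Rabs. Qed.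

Lemma locally_in_radius a :
  Rbar_lt 0 (CV_radius a) -> locally 0 (fun x => Rbar_lt (Rabs x) (CV_radius a)).
Proof.
  intros Ha. destruct (Rbar_lt_below _ Ha) as [r [Hr Hra]].
  generalize (locally_0_Rabs r Hr). apply filter_imp. intros x Hx.
  apply (Rbar_le_lt_trans _ r); [simpl; lra | exact Hra].
Qed.

Lemma INR_S_le_pow2 k : INR (S k) <= 2 ^ k.
Proof.
  induction k as [|k IH]; [simpl; lra |].
  rewrite S_INR. simpl. pose proof (pow_R1_Rle 2 k ltac:(lra)). simpl in IH. lra.
Qed.

Lemma coeff_bound_mult L M1 M2 a b : 0 < L ->
  coeff_bound L M1 a -> coeff_bound L M2 b -> coeff_bound (2 * L) (M1 * M2) (PS_mult a b).
Proof.
  intros HL Ha Hb k. pose proof (coeff_bound_nonneg _ _ _ Ha). pose proof (coeff_bound_nonneg _ _ _ Hb).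
  unfold PS_mult. eapply Rle_trans; [apply Rsum_abs |].
  eapply Rle_trans; [apply sum_Rle with (Bn := fun _ => M1 * M2 * L ^ k) |].
  { intros j Hj. rewrite Rabs_mult.
    replace (M1 * M2 * L ^ k) with ((M1 * L ^ j) * (M2 * L ^ (k - j)))
      by (replace (L ^ k) with (L ^ (j + (k - j))) by (f_equal; lia); rewrite pow_add; ring).
    apply Rmult_le_compat; auto using Rabs_pos. }
  rewrite sum_cte, Rpow_mult_distr.
  pose proof (INR_S_le_pow2 k). pose proof (pow_le L k ltac:(lra)).
  assert (0 <= M1 * M2 * L ^ k) by (repeat apply Rmult_le_pos; auto).
  replace (M1 * M2 * (2 ^ k * L ^ k)) with ((M1 * M2 * L ^ k) * 2 ^ k) by ring.
  apply Rmult_le_compat_l; auto.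
Qed.

Lemma CV_radius_mult_pos a b :
  Rbar_lt 0 (CV_radius a) -> Rbar_lt 0 (CV_radius b) -> Rbar_lt 0 (CV_radius (PS_mult a b)).
Proof.
  intros Ha Hb.
  destruct (Rbar_lt_below _ Ha) as [ra [Hra Ha']]. destruct (Rbar_lt_below _ Hb) as [rb [Hrb Hb']].
  set (r := Rmin ra rb). assert (Hr : 0 < r) by (apply Rmin_glb_lt; lra).
  destruct (coeff_bound_CV_radius a r Hr) as [M1 H1].
  { apply (Rbar_le_lt_trans _ ra); [apply Rmin_l | exact Ha']. }
  destruct (coeff_bound_CV_radius b r Hr) as [M2 H2].
  { apply (Rbar_le_lt_trans _ rb); [apply Rmin_r | exact Hb']. }
  assert (HL : 0 < / r) by (apply Rinv_0_lt_compat; lra).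
  apply (Rbar_lt_le_trans _ (/ (2 * / r))).
  - simpl. apply Rinv_0_lt_compat. lra.
  - apply (CV_radius_coeff_bound _ (M1 * M2)); [lra |]. apply coeff_bound_mult; auto.
Qed.

Definition PS_const (c : R) (k : nat) : R := match k with O => c | S _ => 0 end.

Lemma CV_radius_PS_const c : CV_radius (PS_const c) = p_infty.
Proof.
  rewrite <- CV_radius_decr_1, (CV_radius_ext _ (fun _ => 0)) by reflexivity.
  apply CV_radius_const_0.
Qed.

Lemma PSeries_PS_const c x : PSeries (PS_const c) x = c.
Proof.
  rewrite PSeries_decr_1.
  - rewrite (PSeries_ext _ (fun _ => 0)), PSeries_const_0 by reflexivity. simpl. ring.
  - apply CV_radius_inside. rewrite CV_radius_PS_const. exact I.
Qed.

(* Each coefficient of the reciprocal depends on all earlier ones, so the recursion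
   carries the table of the first [k + 1] coefficients. *)
Fixpoint PS_inv_upto (a : nat -> R) (k : nat) : nat -> R :=
  match k with
  | O => fun _ => / a O
  | S k' => fun i =>
      if Nat.leb i k' then PS_inv_upto a k' i
      else - / a O * sum_f_R0 (fun j => a (S j) * PS_inv_upto a k' (k' - j)%nat) k'
  end.

Definition PS_inv (a : nat -> R) (k : nat) : R := PS_inv_upto a k k.

Lemma PS_inv_upto_eq a k i : (i <= k)%nat -> PS_inv_upto a k i = PS_inv a i.
Proof.
  induction k as [|k IH]; intros Hi.
  - replace i with O by lia. reflexivity.
  - simpl. destruct (Nat.leb i k) eqn:E.
    + apply IH, Nat.leb_le, E.
    + apply Nat.leb_gt in E. replace i with (S k) by lia.
      unfold PS_inv. cbn [PS_inv_upto]. rewrite (proj2 (Nat.leb_gt (S k) k)) by lia.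
      reflexivity.
Qed.

Lemma PS_inv_0 a : PS_inv a O = / a O.
Proof. reflexivity. Qed.

Lemma PS_inv_S a k :
  PS_inv a (S k) = - / a O * sum_f_R0 (fun j => a (S j) * PS_inv a (k - j)%nat) k.
Proof.
  unfold PS_inv at 1. cbn [PS_inv_upto]. rewrite (proj2 (Nat.leb_gt (S k) k)) by lia.
  f_equal. apply sum_eq. intros j Hj. rewrite PS_inv_upto_eq by lia. reflexivity.
Qed.

Lemma PS_mult_inv a : a O <> 0 -> forall k, PS_mult a (PS_inv a) k = PS_const 1 k.
Proof.
  intros H0 [|k]; unfold PS_mult.
  - simpl. rewrite PS_inv_0. field. exact H0.
  - rewrite decomp_sum by lia. simpl. rewrite PS_inv_S.
    set (s := sum_f_R0 (fun j => a (S j) * PS_inv a (k - j)%nat) k). field. exact H0.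
Qed.

Lemma sum_pow_telescope L K k :
  (K - L) * sum_f_R0 (fun j => L ^ S j * K ^ (k - j)) k = L * (K ^ S k - L ^ S k).
Proof.
  induction k as [|k IH]; [simpl; ring |].
  rewrite tech5.
  replace (sum_f_R0 (fun j => L ^ S j * K ^ (S k - j)) k)
    with (K * sum_f_R0 (fun j => L ^ S j * K ^ (k - j)) k).
  - rewrite Nat.sub_diag, Rmult_plus_distr_l, Rmult_comm, Rmult_assoc, (Rmult_comm _ (K - L)), IH.
    simpl. ring.
  - rewrite scal_sum. apply sum_eq. intros j Hj.
    replace (S k - j)%nat with (S (k - j)) by lia. simpl. ring.
Qed.

Lemma coeff_bound_inv a L M : a O <> 0 -> 0 < L -> coeff_bound L M a ->
  coeff_bound (L * (1 + M / Rabs (a O))) (/ Rabs (a O)) (PS_inv a).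
Proof.
  intros H0 HL Ha. set (c := Rabs (a O)). set (K := L * (1 + M / c)).
  assert (Hc : 0 < c) by (apply Rabs_pos_lt, H0).
  assert (HM : c <= M) by (specialize (Ha O); simpl in Ha; unfold c; lra).
  (* This choice of [K] makes the geometric bound close up in the induction. *)
  assert (HKL : K - L = L * M / c) by (unfold K; field; lra).
  assert (HLK : L < K) by (assert (0 < L * M / c) by (apply Rdiv_lt_0_compat; [apply Rmult_lt_0_compat |]; lra); lra).
  assert (Hall : forall k i, (i <= k)%nat -> Rabs (PS_inv a i) <= / c * K ^ i).
  { induction k as [|k IH]; intros i Hi.
    { replace i with O by lia. rewrite PS_inv_0, Rabs_inv. fold c. simpl. lra. }
    destruct (Nat.le_gt_cases i k) as [Hik | Hik]; [apply IH, Hik |].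
    replace i with (S k) by lia.
    rewrite PS_inv_S, Rabs_mult, Rabs_Ropp, Rabs_inv. fold c.
    assert (Hsum : Rabs (sum_f_R0 (fun j => a (S j) * PS_inv a (k - j)%nat) k)
                   <= M / c * sum_f_R0 (fun j => L ^ S j * K ^ (k - j)) k).
    { eapply Rle_trans; [apply Rsum_abs |]. rewrite scal_sum. apply sum_Rle.
      intros j Hj. rewrite Rabs_mult.
      replace (L ^ S j * K ^ (k - j) * (M / c)) with ((M * L ^ S j) * (/ c * K ^ (k - j)))
        by (field; lra).
      apply Rmult_le_compat; auto using Rabs_pos. apply IH. lia. }
    pose proof (sum_pow_telescope L K k) as Htel. rewrite HKL in Htel.
    assert (Hsum' : sum_f_R0 (fun j => L ^ S j * K ^ (k - j)) k <= c / M * K ^ S k).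
    { apply Rmult_le_reg_l with (L * M / c); [apply Rdiv_lt_0_compat; nra |].
      rewrite Htel. replace (L * M / c * (c / M * K ^ S k)) with (L * K ^ S k) by (field; lra).
      pose proof (pow_lt L (S k) HL). nra. }
    apply Rle_trans with (/ c * (M / c * (c / M * K ^ S k))).
    - apply Rmult_le_compat_l; [left; apply Rinv_0_lt_compat, Hc |].
      eapply Rle_trans; [exact Hsum |]. apply Rmult_le_compat_l; [| exact Hsum'].
      left; apply Rdiv_lt_0_compat; lra.
    - right. field. lra. }
  intros k. apply (Hall k k). lia.
Qed.

Lemma CV_radius_inv_pos a :
  a O <> 0 -> Rbar_lt 0 (CV_radius a) -> Rbar_lt 0 (CV_radius (PS_inv a)).
Proof.
  intros H0 Ha. destruct (Rbar_lt_below _ Ha) as [r [Hr Hra]].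
  destruct (coeff_bound_CV_radius a r Hr Hra) as [M HM].
  assert (HL : 0 < / r) by (apply Rinv_0_lt_compat; lra).
  assert (HM0 : 0 <= M / Rabs (a O)).
  { apply Rmult_le_pos; [apply (coeff_bound_nonneg _ _ _ HM) |].
    left; apply Rinv_0_lt_compat, Rabs_pos_lt, H0. }
  apply (Rbar_lt_le_trans _ (/ (/ r * (1 + M / Rabs (a O))))).
  - simpl. apply Rinv_0_lt_compat, Rmult_lt_0_compat; lra.
  - apply (CV_radius_coeff_bound _ (/ Rabs (a O))); [apply Rmult_lt_0_compat; lra |].
    apply coeff_bound_inv; auto.
Qed.

Definition analytic0 (f : R -> R) : Prop :=
  exists a, Rbar_lt 0 (CV_radius a) /\ locally 0 (fun x => f x = PSeries a x).

Lemma analytic0_ext f g : (forall x, f x = g x) -> analytic0 f -> analytic0 g.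
Proof.
  intros Hfg [a [Ha Hf]]. exists a. split; [exact Ha |].
  apply (filter_imp _ _ (fun x Hx => eq_trans (eq_sym (Hfg x)) Hx) Hf).
Qed.

Lemma analytic0_const c : analytic0 (fun _ => c).
Proof.
  exists (PS_const c). rewrite CV_radius_PS_const. split; [exact I |].
  apply filter_forall. intros x. rewrite PSeries_PS_const. reflexivity.
Qed.

Lemma analytic0_id : analytic0 (fun x => x).
Proof.
  exists (PS_incr_1 (PS_const 1)). rewrite CV_radius_incr_1, CV_radius_PS_const.
  split; [exact I |]. apply filter_forall. intros x.
  rewrite PSeries_incr_1, PSeries_PS_const. apply eq_sym, Rmult_1_r.
Qed.

Lemma analytic0_plus f g :
  analytic0 f -> analytic0 g -> analytic0 (fun x => f x + g x).
Proof.
  intros [a [Ha Hf]] [b [Hb Hg]]. exists (PS_plus a b). split.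
  - eapply Rbar_lt_le_trans; [| apply CV_radius_plus].
    apply Rbar_min_case; assumption.
  - generalize (filter_and _ _ (filter_and _ _ Hf Hg)
      (filter_and _ _ (locally_in_radius a Ha) (locally_in_radius b Hb))).
    apply filter_imp. intros x [[Hfx Hgx] [Hxa Hxb]].
    rewrite PSeries_plus by (apply CV_radius_inside; assumption). congruence.
Qed.

Lemma analytic0_mult f g :
  analytic0 f -> analytic0 g -> analytic0 (fun x => f x * g x).
Proof.
  intros [a [Ha Hf]] [b [Hb Hg]]. exists (PS_mult a b). split.
  - apply CV_radius_mult_pos; assumption.
  - generalize (filter_and _ _ (filter_and _ _ Hf Hg)
      (filter_and _ _ (locally_in_radius a Ha) (locally_in_radius b Hb))).
    apply filter_imp. intros x [[Hfx Hgx] [Hxa Hxb]].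
    rewrite PSeries_mult by assumption. congruence.
Qed.

Lemma analytic0_opp f : analytic0 f -> analytic0 (fun x => - f x).
Proof.
  intros Hf. apply (analytic0_ext (fun x => -1 * f x)); [intros; ring |].
  apply analytic0_mult; [apply analytic0_const | exact Hf].
Qed.

Lemma analytic0_minus f g :
  analytic0 f -> analytic0 g -> analytic0 (fun x => f x - g x).
Proof. intros Hf Hg. apply analytic0_plus; [exact Hf | apply analytic0_opp, Hg]. Qed.

Lemma analytic0_pow f k : analytic0 f -> analytic0 (fun x => f x ^ k).
Proof.
  intros Hf. induction k as [|k IH]; [exact (analytic0_const 1) |].
  apply analytic0_mult; assumption.
Qed.

Lemma analytic0_inv f : analytic0 f -> f 0 <> 0 -> analytic0 (fun x => / f x).
Proof.
  intros [a [Ha Hf]] Hf0.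
  assert (Ha0 : a O <> 0) by (rewrite <- PSeries_0, <- (locally_singleton _ _ Hf); exact Hf0).
  pose proof (CV_radius_inv_pos a Ha0 Ha) as Hia.
  exists (PS_inv a). split; [exact Hia |].
  generalize (filter_and _ _ Hf
    (filter_and _ _ (locally_in_radius a Ha) (locally_in_radius _ Hia))).
  apply filter_imp. intros x [Hfx [Hxa Hxb]].
  assert (Hprod : PSeries a x * PSeries (PS_inv a) x = 1).
  { rewrite <- PSeries_mult, <- (PSeries_PS_const 1 x) by assumption.
    apply PSeries_ext, PS_mult_inv, Ha0. }
  rewrite Hfx. apply (Rmult_eq_reg_l (PSeries a x)).
  - rewrite Hprod, Rinv_r; [reflexivity |]. intros H0. rewrite H0 in Hprod. lra.
  - intros H0. rewrite H0 in Hprod. lra.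
Qed.

Ltac analytic0_closure :=
  unfold Rdiv; repeat first
    [ apply analytic0_const | apply analytic0_id | apply analytic0_plus
    | apply analytic0_minus | apply analytic0_opp | apply analytic0_mult
    | apply analytic0_pow ].

Lemma analytic0_Derive f a :
  Rbar_lt 0 (CV_radius a) -> locally 0 (fun x => f x = PSeries a x) -> Derive f 0 = a 1%nat.
Proof.
  intros Ha Hf. rewrite (Derive_ext_loc _ _ _ Hf), Derive_PSeries, PSeries_0.
  - unfold PS_derive. simpl. ring.
  - rewrite Rabs_R0. exact Ha.
Qed.

Lemma analytic0_factor_id f : analytic0 f -> f 0 = 0 ->
  exists g, analytic0 g /\ g 0 = Derive f 0 /\ forall x, f x = x * g x.
Proof.
  intros [a [Ha Hf]] Hf0.
  assert (Ha0 : a O = 0) by (rewrite <- PSeries_0, <- (locally_singleton _ _ Hf); exact Hf0).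
  pose proof (analytic0_Derive f a Ha Hf) as HD.
  exists (fun x => if Req_EM_T x 0 then Derive f 0 else f x / x). repeat split.
  - exists (PS_decr_1 a). rewrite CV_radius_decr_1. split; [exact Ha |].
    generalize Hf. apply filter_imp. intros x Hfx.
    destruct (Req_EM_T x 0) as [-> | Hx0].
    + rewrite HD, PSeries_0. reflexivity.
    + rewrite Hfx, (PSeries_decr_1_aux a x Ha0). field. exact Hx0.
  - destruct (Req_EM_T 0 0); [reflexivity | contradiction].
  - intros x. destruct (Req_EM_T x 0) as [-> | Hx0].
    + rewrite Hf0. ring.
    + field. exact Hx0.
Qed.

Lemma locally_nonzero (f : R -> R) (x : R) :
  filterlim f (locally x) (locally (f x)) -> f x <> 0 -> locally x (fun y => f y <> 0).
Proof.
  intros Hf Hfx. apply (Hf (fun y => y <> 0)).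
  exists (mkposreal _ (Rabs_pos_lt _ Hfx)). intros y Hy Hy0. subst y.
  change (Rabs (0 + - f x) < Rabs (f x)) in Hy.
  rewrite Rplus_0_l, Rabs_Ropp in Hy. lra.
Qed.

Lemma analytic0_nonzero_near f : analytic0 f -> f 0 <> 0 -> locally 0 (fun x => f x <> 0).
Proof.
  intros [a [Ha Hf]] Hf0. rewrite (locally_singleton _ _ Hf) in Hf0.
  assert (Hcont : filterlim (PSeries a) (locally 0) (locally (PSeries a 0))).
  { apply continuity_pt_filterlim, PSeries_continuity. rewrite Rabs_R0. exact Ha. }
  generalize (filter_and _ _ Hf (locally_nonzero _ _ Hcont Hf0)). apply filter_imp.
  intros x [Hfx Hx]. rewrite Hfx. exact Hx.
Qed.

Lemma analytic0_punctured_pseries F c :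
  analytic0 c -> locally 0 (fun x => x <> 0 -> F x = c x) ->
  exists r, 0 < r /\ exists a, forall x, 0 < Rabs x < r -> is_pseries a x (F x).
Proof.
  intros [a [Ha Hc]] HF.
  destruct (filter_and _ _ (filter_and _ _ HF Hc) (locally_in_radius a Ha)) as [r Hr].
  exists r. split; [apply cond_pos |]. exists a. intros x [Hx0 Hxr].
  destruct (Hr x (proj2 (ball_0_Rabs r x) Hxr)) as [[HFx Hcx] Hxa].
  rewrite HFx, Hcx by (intros ->; rewrite Rabs_R0 in Hx0; lra).
  apply PSeries_correct, CV_radius_inside, Hxa.
Qed.

Lemma pow_split_at x n k j : (2 <= n)%nat -> j = (n - 2 + k)%nat -> x ^ j = x ^ (n - 2) * x ^ k.
Proof. intros _ ->. apply pow_add. Qed.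

(* Exposing [x ^ (n - 2)] as a common factor lets [field] treat it as an atom. *)
Ltac split_pows x n :=
  rewrite ?(pow_split_at x n 4 (n + 2)), ?(pow_split_at x n 3 (n + 1)),
    ?(pow_split_at x n 2 n), ?(pow_split_at x n 1 (n - 1)) in * by lia.

Lemma INR_ge_3 n : (3 <= n)%nat -> 3 <= INR n.
Proof. intros Hn. apply (le_INR 3) in Hn. simpl in Hn. lra. Qed.

(* The denominator of [delta], multiplied by [n (n^2 - 1) Dfun]. *)
Definition delta_den (n : nat) (e : R) : R :=
  (INR n + 2) * Nfun n e * ((e ^ (n + 1) - 1) * (INR n - 1) + (e - e ^ n) * (INR n + 1))
  + (- (INR n - 1) * e ^ n + INR n * e ^ (n - 1) - 1) * (Dfun n e * (INR n + 1)).

Lemma Dfun_delta_den_nonzero_near n :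
  (3 <= n)%nat -> locally 0 (fun e => Dfun n e <> 0 /\ delta_den n e <> 0).
Proof.
  intros Hn. pose proof (INR_ge_3 n Hn).
  assert (Hpow0 : forall k, (1 <= k)%nat -> 0 ^ k = 0) by (intros k Hk; apply pow_i; lia).
  assert (HD0 : Dfun n 0 = INR n).
  { unfold Dfun. rewrite !Hpow0 by lia. ring. }
  apply filter_and; apply locally_nonzero.
  - apply (ex_derive_continuous (K := R_AbsRing) (V := R_NormedModule)).
    unfold Dfun. auto_derive. trivial.
  - lra.
  - apply (ex_derive_continuous (K := R_AbsRing) (V := R_NormedModule)).
    unfold delta_den, Nfun, Dfun. auto_derive. trivial.
  - replace (delta_den n 0) with (-2); [lra |].
    unfold delta_den, Nfun. rewrite HD0, !Hpow0 by lia. ring.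
Qed.

Lemma Qfun_root n e : (3 <= n)%nat -> Dfun n e <> 0 -> Qfun n e e = 0.
Proof.
  intros Hn HD. pose proof (INR_ge_3 n Hn).
  unfold Qfun, Pfun, alpha, beta, gamma, Mfun, Kfun, Nfun, Dfun in *.
  split_pows e n. set (p := e ^ (n - 2)) in *. set (nr := INR n) in *.
  field. repeat split; lra || assumption.
Qed.

Lemma Qfun_shift_derive n e : (3 <= n)%nat -> Dfun n e <> 0 -> delta_den n e <> 0 ->
  is_derive (fun x => Qfun n e (e + x)) 0 (e ^ (n - 2) * (1 - e)).
Proof.
  intros Hn HD HW. pose proof (INR_ge_3 n Hn).
  unfold Qfun, Pfun. auto_derive; [trivial |].
  rewrite !Rplus_0_r, minus_INR by lia.
  replace (Init.Nat.pred (n - 1)) with (n - 2)%nat by lia.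
  replace (Init.Nat.pred n) with (n - 1)%nat by lia.
  unfold delta_den, beta, gamma, delta, Mfun, Kfun, Nfun, Dfun in *.
  split_pows e n. simpl INR.
  set (p := e ^ (n - 2)) in *. set (nr := INR n) in *.
  field. repeat split; lra || assumption.
Qed.

Lemma h2_split n e rho : (2 <= n)%nat -> rho <> 0 -> 1 - rho <> 0 -> Qfun n e rho <> 0 ->
  h2 n e rho = rho ^ (n - 2) * (1 - rho) / Qfun n e rho - / ((1 - rho) * rho).
Proof.
  intros Hn H0 H1 HQ. unfold h2.
  replace (rho ^ (n + 1) - rho ^ n + rho ^ n * Pfun n e rho + alpha n e + beta n e * rho)
    with (rho ^ (n - 2) * rho * (1 - rho) ^ 2 - Qfun n e rho).
  - field. auto.
  - unfold Qfun. split_pows rho n. ring.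
Qed.

Lemma h2_pole_residue_1 n e : (3 <= n)%nat -> 0 < e < 1 ->
  Dfun n e <> 0 -> delta_den n e <> 0 ->
  exists c, analytic0 c /\ locally 0 (fun x => x <> 0 -> h2 n e (e + x) - / x = c x).
Proof.
  intros Hn He HD HW.
  set (G := fun x => (e + x) ^ (n - 2) * (1 - (e + x))).
  assert (HG0 : G 0 = e ^ (n - 2) * (1 - e)) by (unfold G; rewrite Rplus_0_r; reflexivity).
  assert (HG0_nz : G 0 <> 0).
  { rewrite HG0. apply Rmult_integral_contrapositive. split; [apply pow_nonzero |]; lra. }
  destruct (analytic0_factor_id (fun x => Qfun n e (e + x))) as [s [Hs [Hs0 HQs]]].
  { unfold Qfun, Pfun. analytic0_closure. }
  { rewrite Rplus_0_r. apply Qfun_root; assumption. }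
  assert (HQ' : Derive (fun x => Qfun n e (e + x)) 0 = G 0)
    by (rewrite HG0; apply is_derive_unique, Qfun_shift_derive; assumption).
  rewrite HQ' in Hs0.
  assert (Hs0_nz : s 0 <> 0) by (rewrite Hs0; exact HG0_nz).
  destruct (analytic0_factor_id (fun x => G x * / s x - 1)) as [v [Hv [_ Huv]]].
  { apply analytic0_minus; [apply analytic0_mult | apply analytic0_const].
    - unfold G. analytic0_closure.
    - apply analytic0_inv; assumption. }
  { rewrite Hs0. field. exact HG0_nz. }
  exists (fun x => v x - / ((1 - (e + x)) * (e + x))). split.
  { apply analytic0_minus; [exact Hv |]. apply analytic0_inv.
    - analytic0_closure.
    - rewrite Rplus_0_r. apply Rmult_integral_contrapositive. split; lra. }
  assert (Hnear : locally 0 (fun x => Rabs x < Rmin e (1 - e)))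
    by (apply locally_0_Rabs, Rmin_glb_lt; lra).
  generalize (filter_and _ _ Hnear (analytic0_nonzero_near s Hs Hs0_nz)). apply filter_imp.
  intros x [Hx Hsx] Hx0.
  assert (Hxe : - e < x < 1 - e).
  { pose proof (Rmin_l e (1 - e)). pose proof (Rmin_r e (1 - e)).
    apply Rabs_def2 in Hx. lra. }
  assert (HQx : Qfun n e (e + x) <> 0)
    by (rewrite HQs; apply Rmult_integral_contrapositive; split; assumption).
  rewrite h2_split, HQs by (lia || lra || exact HQx).
  replace (v x) with ((G x * / s x - 1) / x) by (rewrite Huv; field; exact Hx0).
  unfold G. field. repeat split; auto; lra.
Qed.

Theorem lemma4p6 (n : nat) (Hn : (3 <= n)%nat) :
  exists e0 : R, 0 < e0 /\
    forall e : R, 0 < e < e0 -> e < 1 ->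
      exists r : R, 0 < r /\
      exists c : nat -> R,
        forall rho : R, 0 < Rabs (rho - e) < r ->
          is_pseries c (rho - e) (h2 n e rho - / (rho - e)).
Proof.
  destruct (Dfun_delta_den_nonzero_near n Hn) as [e0 He0].
  exists e0. split; [apply cond_pos |]. intros e He He1.
  assert (Hsmall : Dfun n e <> 0 /\ delta_den n e <> 0).
  { apply He0, ball_0_Rabs. rewrite Rabs_pos_eq; lra. }
  destruct (h2_pole_residue_1 n e Hn (conj (proj1 He) He1) (proj1 Hsmall) (proj2 Hsmall))
    as [c [Hc Hh2]].
  destruct (analytic0_punctured_pseries (fun x => h2 n e (e + x) - / x) c Hc Hh2)
    as [r [Hr [a Ha]]].
  exists r. split; [exact Hr |]. exists a. intros rho Hrho.
  replace (h2 n e rho) with (h2 n e (e + (rho - e))) by (f_equal; ring).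
  apply Ha, Hrho.
Qed.
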